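(* Let $(X_r)_{r\ge 0}$ be a discrete time Markov chain on a finite state space $S$ with transition probability matrix $\mathbf{P}$, let $M\subset S$ with $M\neq\emptyset$ and $\overline{M}=S\setminus M\neq\emptyset$, and assume that $\mathbf{I}-\mathbf{P}_M$ and $\mathbf{I}-\mathbf{P}_{\overline{M}}$ are invertible. Then for every integer $m\ge 0$: (a) $\displaystyle M_m(\mathcal{N}_1)=\sum_{j=0}^{m} b_{m,j,1}\,\mathbf{P}_M^{j}\,(\mathbf{I}-\mathbf{P}_M)^{-j-1}\,\mathbf{P}_{M\overline{M}}$; (b) $\displaystyle M_m(\mathcal{R}_1)=\mathbf{P}_M+\mathbf{P}_{M\overline{M}}\sum_{j=0}^{m} b_{m,j,2}\,\mathbf{P}_{\overline{M}}^{j}\,(\mathbf{I}-\mathbf{P}_{\overline{M}})^{-j-1}\,\mathbf{P}_{\overline{M}M}$.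
   Context: Moment generating Stirling numbers: for integers $i\ge0$, $j\ge0$ and real $k$, $b_{i,j,k}=\sum_{r=0}^{j}\binom{j}{r}(-1)^{j-r}(r+k)^i$, with the convention $0^0=1$. Block notation: $\mathbf{P}_M=(p_{ij})_{i,j\in M}$, $\mathbf{P}_{M\overline{M}}=(p_{ij})_{i\in M,j\in\overline{M}}$, $\mathbf{P}_{\overline{M}M}=(p_{ij})_{i\in\overline{M},j\in M}$, $\mathbf{P}_{\overline{M}}=(p_{ij})_{i,j\in\overline{M}}$. Passage and recurrence times (matrix valued): for $i\in M$, let $\tau^{N}=\min\{r\ge1: \#\{1\le t\le r: X_t\in\overline{M}\}=1\}$ and $\tau^{R}=\min\{r\ge1:\#\{1\le t\le r: X_t\in M\}=1\}$. For $n\ge0$, $P(\mathcal{N}_1=n)$ is the $|M|\times|\overline{M}|$ matrix with $(i,j)$ entry $P(\tau^N=n,\,X_n=j\mid X_0=i)$ ($i\in M$, $j\in\overline{M}$), and $P(\mathcal{R}_1=n)$ is the $|M|\times|M|$ matrix with $(i,j)$ entry $P(\tau^R=n,\,X_n=j\mid X_0=i)$ ($i,j\in M$). Moments: for a matrix random variable $\mathcal{Y}$ of this kind, $M_m(\mathcal{Y})=\sum_{n=0}^{\infty} n^m P(\mathcal{Y}=n)$ (entrywise), with $0^0=1$. *)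

From HB Require Import structures.
From mathcomp Require Import all_boot all_order all_algebra.
From mathcomp Require Import all_classical all_reals all_analysis.
Set Implicit Arguments. Unset Strict Implicit. Unset Printing Implicit Defensive.
Import Order.TTheory GRing.Theory Num.Theory.
Import numFieldNormedType.Exports.
Local Open Scope classical_set_scope.
Local Open Scope ring_scope.

Section Defs.
Variables (R : realType) (S : finType).

Definition stochastic (P : S -> S -> R) : Prop :=
  (forall x y, 0 <= P x y) /\ (forall x, \sum_(y : S) P x y = 1).

Definition bst (i j : nat) (k : R) : R :=
  \sum_(r < j.+1) ('C(j, r))%:R * (-1) ^+ (j - r) * (r%:R + k) ^+ i.

(* trajectory X_0 = x0, X_t = s_(t-1) for 1 <= t <= n *)
Definition traj (n : nat) (x0 : S) (s : n.-tuple S) (t : nat) : S :=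
  if t is t'.+1 then nth x0 s t' else x0.

Definition pathw (P : S -> S -> R) (n : nat) (x0 : S) (s : n.-tuple S) : R :=
  \prod_(t < n) P (traj x0 s t) (traj x0 s t.+1).

Definition cnt (A : {set S}) (x : nat -> S) (r : nat) : nat :=
  \sum_(1 <= t < r.+1) (x t \in A : nat).

(* tau = min{r >= 1 : #{1<=t<=r : X_t \in A} = 1} equals n *)
Definition tau_is (A : {set S}) (x : nat -> S) (n : nat) : bool :=
  [&& (1 <= n)%N, cnt A x n == 1%N & [forall r : 'I_n, cnt A x r != 1%N]].

(* P(tau = n, X_n = j | X_0 = i), tau being the first time the count of
   visits to A reaches 1 *)
Definition probTau (P : S -> S -> R) (A : {set S}) (i j : S) (n : nat) : R :=
  \sum_(s : n.-tuple S | tau_is A (traj i s) n && (traj i s n == j)) pathw P i s.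

Definition ev (A : {set S}) (k : 'I_#|A|) : S := enum_val k.

Definition blk (P : S -> S -> R) (A B : {set S}) : 'M[R]_(#|A|, #|B|) :=
  \matrix_(i, j) P (ev i) (ev j).

Definition probN1 (P : S -> S -> R) (M : {set S}) (n : nat) : 'M[R]_(#|M|, #|~: M|) :=
  \matrix_(i, j) probTau P (~: M) (ev i) (ev j) n.
Definition probR1 (P : S -> S -> R) (M : {set S}) (n : nat) : 'M[R]_(#|M|, #|M|) :=
  \matrix_(i, j) probTau P M (ev i) (ev j) n.

Definition moment_is {p q : nat} (Y : nat -> 'M[R]_(p, q)) (m : nat)
    (L : 'M[R]_(p, q)) : Prop :=
  forall i j, (fun N : nat => \sum_(n < N) (n%:R ^+ m * Y n i j)) @ \oo --> L i j.

End Defs.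

(* The first-step decomposition gives P(N_1 = k+1) = P_M^k P_{M Mbar} and
   P(R_1 = k+2) = P_{M Mbar} P_Mbar^k P_{Mbar M}, so both moments are series
   sum_k (k + x)^m Q^k for a substochastic Q with A = (I - Q)^-1.  Newton's
   forward-difference formula gives (k + x)^m = sum_(j <= m) C(k, j) b_{m,j,x},
   because (m+1)-st differences of a degree-m polynomial vanish, so it suffices
   that U_j(N) = sum_(k < N) C(k, j) Q^k tends to Q^j A^(j+1).  Summation by parts
   gives (I - Q) U_(j+1)(N+1) = Q U_j(N) - C(N, j+1) Q^(N+1).  The U_j are
   entrywise nondecreasing; U_0(N) = A (I - Q^N) is bounded since Q^N has entries
   in [0, 1], whence A = lim U_0 >= 0, and then U_(j+1)(N+1) <= A Q lim U_j.  So
   every U_j converges, the boundary term C(N, j+1) Q^(N+1) tends to 0, and the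
   recursion passes to the limit. *)

From HB Require Import structures.
From mathcomp Require Import all_boot all_order all_algebra.
From mathcomp Require Import all_classical all_reals all_analysis.
From mathcomp Require Import ring lra.
Import Order.TTheory GRing.Theory Num.Theory.
Import numFieldNormedType.Exports.
Local Open Scope classical_set_scope.
Local Open Scope ring_scope.

Section ForwardDifference.
Context {R : comRingType}.

Definition fdiff (g : nat -> R) k := g k.+1 - g k.

Lemma iter_fdiffE j g k : iter j fdiff g k =
  \sum_(0 <= r < j.+1) 'C(j, r)%:R * (-1) ^+ (j - r) * g (k + r)%N.
Proof.
elim: j k => [|j IH] k; first by rewrite big_nat1 /= bin0 subnn expr0 !mul1r addn0.
rewrite [LHS]/= /fdiff !IH [in RHS]big_nat_recl // bin0 subn0.
under [in RHS]eq_bigr do rewrite binS natrD !mulrDl subSS.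
rewrite big_split /= [X in _ - X]big_nat_recl // bin0 subn0.
have -> : \sum_(0 <= i < j.+1) 'C(j, i.+1)%:R * (-1) ^+ (j - i) * g (k + i.+1)%N =
     - \sum_(0 <= i < j) 'C(j, i.+1)%:R * (-1) ^+ (j - i.+1) * g (k + i.+1)%N.
  rewrite big_nat_recr //= bin_small // !mul0r addr0 -sumrN.
  by apply: eq_big_nat => i /andP [_ ij]; rewrite -(subnSK ij) exprS; ring.
under eq_bigr do rewrite addSnnS.
rewrite exprS addn0 !mul1r; ring.
Qed.

Lemma iter_fdiff_sum d (I : Type) (s : seq I) (a : I -> R) (f : I -> nat -> R) k :
  iter d fdiff (fun k => \sum_(i <- s) a i * f i k) k =
  \sum_(i <- s) a i * iter d fdiff (f i) k.
Proof.
elim: d k => [|d IH] k //=.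
by rewrite /fdiff !IH -sumrB; apply: eq_bigr => i _; rewrite mulrBr.
Qed.

Lemma iter_fdiff_pow (x : R) m d :
  (m < d)%N -> forall k, iter d fdiff (fun r => (r%:R + x) ^+ m) k = 0.
Proof.
elim/ltn_ind: m d => m IH [//|d] md k; rewrite iterSr.
have -> : fdiff (fun r => (r%:R + x) ^+ m) =
          (fun r => \sum_(i < m) 'C(m, i)%:R * (r%:R + x) ^+ i).
  apply: funext => r; rewrite /fdiff -natr1 addrAC exprD1n big_ord_recr /=.
  by rewrite binn mulr1n addrK; apply: eq_bigr => i _; rewrite mulr_natl.
rewrite iter_fdiff_sum big1 // => i _.
by rewrite IH ?mulr0 // (leq_trans (ltn_ord i)).
Qed.

Lemma newton_forward d g : (forall k, iter d fdiff g k = 0) ->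
  forall k, g k = \sum_(j < d) 'C(k, j)%:R * iter j fdiff g 0%N.
Proof.
move=> gd k; elim: k g d gd => [|k IH] g [|d] gd.
- by rewrite big_ord0; exact: gd 0%N.
- rewrite big_ord_recl big1 => [|j _]; last by rewrite bin0n mul0r.
  by rewrite addr0 bin0 mul1r.
- by rewrite big_ord0; exact: gd k.+1.
have -> : g k.+1 = g k + fdiff g k by rewrite /fdiff addrC subrK.
rewrite (IH g d.+1 gd) (IH (fdiff g) d) => [|j]; last by rewrite -iterSr.
rewrite [in RHS]big_ord_recl [in LHS]big_ord_recl /= !bin0 -addrA; congr (_ + _).
under [in RHS]eq_bigr do rewrite /bump /= add1n binS natrD mulrDl.
rewrite big_split /=; congr (_ + _); apply: eq_bigr => j _ //.
by rewrite add0n -iterSr.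
Qed.

End ForwardDifference.

Lemma bst_fdiff (R : realType) m j (x : R) :
  bst m j x = iter j fdiff (fun r : nat => (r%:R + x) ^+ m) 0%N.
Proof. by rewrite iter_fdiffE big_mkord; apply: eq_bigr => r _; rewrite add0n. Qed.

Lemma shifted_pow_bst (R : realType) (x : R) m k :
  (k%:R + x) ^+ m = \sum_(j < m.+1) 'C(k, j)%:R * bst m j x.
Proof.
rewrite (newton_forward _ _ (iter_fdiff_pow x m m.+1 (ltnSn m)) k).
by apply: eq_bigr => j _; rewrite bst_fdiff.
Qed.

Section MatrixSequences.
Context {R : numFieldType}.

Lemma cvg_mxP {p q : nat} (F : nat -> 'M[R]_(p, q)) (L : 'M[R]_(p, q)) :
  F @ \oo --> L <-> forall i j, (fun N => F N i j) @ \oo --> L i j.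
Proof.
split=> [FL i j|FL]; first exact: (continuous_cvg _ (@coord_continuous _ _ _ i j L)) FL.
apply/cvg_ballP => e e0.
have FLe : \forall N \near \oo, forall i j, ball (L i j) e (F N i j).
  by apply: filter_forall => i; apply: filter_forall => j; move/cvg_ballP: (FL i j); apply.
by apply: filterS FLe => N FLN; split.
Qed.

Lemma cvg_mulmxl {p q r : nat} (B : 'M[R]_(p, q))
    {F : nat -> 'M[R]_(q, r)} {L : 'M[R]_(q, r)} :
  F @ \oo --> L -> (fun N => B *m F N) @ \oo --> B *m L.
Proof.
move/cvg_mxP=> FL; apply/cvg_mxP => i j; rewrite mxE; under eq_fun do rewrite mxE.
by apply: cvg_big => [|l _]; [exact: add_continuous|exact: cvgMr].
Qed.

Lemma cvg_mulmxr {p q r : nat} (B : 'M[R]_(q, r))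
    {F : nat -> 'M[R]_(p, q)} {L : 'M[R]_(p, q)} :
  F @ \oo --> L -> (fun N => F N *m B) @ \oo --> L *m B.
Proof.
move/cvg_mxP=> FL; apply/cvg_mxP => i j; rewrite mxE; under eq_fun do rewrite mxE.
by apply: cvg_big => [|l _]; [exact: add_continuous|exact: cvgMl].
Qed.

End MatrixSequences.

Section MonotoneMatrixSequences.
Context {R : realType} {p q : nat} {F : nat -> 'M[R]_(p, q)}.
Hypothesis F_nd : forall N i j, F N i j <= F N.+1 i j.

Lemma nondecreasing_mx_is_cvgn (B : 'M[R]_(p, q)) :
  (forall N i j, F N i j <= B i j) -> cvgn F.
Proof.
move=> FB; apply/cvg_ex; exists (\matrix_(i, j) limn (fun N => F N i j)).
apply/cvg_mxP => i j; rewrite mxE; apply: nondecreasing_is_cvgn.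
  exact/nondecreasing_seqP.
by exists (B i j) => _ [N _ <-].
Qed.

Lemma nondecreasing_mx_cvg_le {L : 'M[R]_(p, q)} :
  F @ \oo --> L -> forall N i j, F N i j <= L i j.
Proof.
move/cvg_mxP=> FL N i j; rewrite -(cvg_lim _ (FL i j)) //.
by apply: nondecreasing_cvgn_le; [exact/nondecreasing_seqP|exact: cvgP (FL i j)].
Qed.

End MonotoneMatrixSequences.

Section NonnegativeMatrices.
Context {R : numDomainType} {p q r : nat}.

Lemma ler_mulmx2l (X : 'M[R]_(p, q)) (Y Z : 'M[R]_(q, r)) :
  (forall i j, 0 <= X i j) -> (forall i j, Y i j <= Z i j) ->
  forall i j, (X *m Y) i j <= (X *m Z) i j.
Proof. by move=> X0 YZ i j; rewrite !mxE; apply: ler_sum => l _; apply: ler_wpM2l. Qed.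

Lemma mulmx_ge0 (X : 'M[R]_(p, q)) (Y : 'M[R]_(q, r)) :
  (forall i j, 0 <= X i j) -> (forall i j, 0 <= Y i j) ->
  forall i j, 0 <= (X *m Y) i j.
Proof. by move=> X0 Y0 i j; rewrite mxE; apply: sumr_ge0 => l _; apply: mulr_ge0. Qed.

End NonnegativeMatrices.

Section SubstochasticPowerSeries.
Context {R : realType} {n : nat} (Q : 'M[R]_n).

Definition mxpsum (c : nat -> R) N : 'M[R]_n := \sum_(k < N) c k *: Q ^+ k.

Lemma mxpsum_Abel c N : (1%:M - Q) *m mxpsum c N.+1 =
  c 0%N *: 1%:M + Q *m mxpsum (fdiff c) N - c N *: Q ^+ N.+1.
Proof.
have mulQ k : Q *m Q ^+ k = Q ^+ k.+1 by rewrite mulmxE -exprS.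
have head : mxpsum c N.+1 = c 0%N *: 1%:M + \sum_(k < N) c k.+1 *: Q ^+ k.+1.
  by rewrite /mxpsum big_ord_recl expr0.
have shift : Q *m mxpsum c N.+1 = \sum_(k < N) c k *: Q ^+ k.+1 + c N *: Q ^+ N.+1.
  rewrite mulmx_sumr big_ord_recr -scalemxAr mulQ.
  by under eq_bigr do rewrite -scalemxAr mulQ.
have diff : Q *m mxpsum (fdiff c) N =
    \sum_(k < N) c k.+1 *: Q ^+ k.+1 - \sum_(k < N) c k *: Q ^+ k.+1.
  by rewrite mulmx_sumr -sumrB; apply: eq_bigr => k _; rewrite -scalemxAr mulQ scalerBl.
by rewrite mulmxBl mul1mx shift diff head opprD !addrA.
Qed.

Hypothesis Q_ge0 : forall i j, 0 <= Q i j.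
Hypothesis Q_rowsum : forall i, \sum_j Q i j <= 1.
Hypothesis Q_unit : (1%:M - Q) \in unitmx.

Let A := invmx (1%:M - Q).

Lemma exprmx_ge0 k i j : 0 <= (Q ^+ k) i j.
Proof.
elim: k i j => [|k IH] i j; first by rewrite expr0 mxE ler0n.
by rewrite exprS -mulmxE; apply: mulmx_ge0.
Qed.

Lemma exprmx_rowsum k i : \sum_j (Q ^+ k) i j <= 1.
Proof.
elim: k i => [|k IH] i.
  rewrite expr0 (bigD1 i) //= big1 ?addr0 => [|j /negbTE ji]; last by rewrite mxE eq_sym ji.
  by rewrite mxE eqxx.
rewrite exprS -mulmxE; under eq_bigr do rewrite mxE.
rewrite exchange_big /=; apply: le_trans (Q_rowsum i); apply: ler_sum => l _.
by rewrite -mulr_sumr ler_piMr.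
Qed.

Lemma exprmx_le1 k i j : (Q ^+ k) i j <= 1.
Proof.
apply: le_trans (exprmx_rowsum k i).
by rewrite (bigD1 j) //= lerDl sumr_ge0 // => l _; exact: exprmx_ge0.
Qed.

Lemma ler_mxpsumS c : (forall k, 0 <= c k) ->
  forall N i j, mxpsum c N i j <= mxpsum c N.+1 i j.
Proof.
move=> c0 N i j; rewrite [in leRHS]/mxpsum big_ord_recr /= [in leRHS]mxE.
by rewrite lerDl mxE mulr_ge0 ?exprmx_ge0.
Qed.

Lemma mxpsumE c N : mxpsum c N.+1 =
  A *m (c 0%N *: 1%:M + Q *m mxpsum (fdiff c) N - c N *: Q ^+ N.+1).
Proof. by rewrite -mxpsum_Abel mulmxA mulVmx // mul1mx. Qed.

Lemma invmx_1B_comm : A *m Q = Q *m A.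
Proof.
have := mulVmx Q_unit; have := mulmxV Q_unit.
rewrite mulmxBl mulmxBr mul1mx mulmx1 => h1 h2.
by apply: oppr_inj; apply: (addrI A); rewrite -/A h1 h2.
Qed.

Lemma bounded_mxpsum_term_cvg0 c (B : 'M[R]_n) : (forall k, 0 <= c k) ->
  (forall N i j, mxpsum c N.+1 i j <= B i j) ->
  (fun N => c N *: Q ^+ N) @ \oo --> (0 : 'M[R]_n).
Proof.
move=> c0 cB; have nd := ler_mxpsumS c c0.
have cB' N i j : mxpsum c N i j <= B i j.
  by case: N => [|N] //; exact: le_trans (nd 0%N i j) (cB 0%N i j).
have /cvg_ex[L cL] := nondecreasing_mx_is_cvgn nd _ cB'.
have -> : (fun N => c N *: Q ^+ N) = (fun N => mxpsum c N.+1 - mxpsum c N).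
  by apply: funext => N; rewrite /mxpsum big_ord_recr /= addrAC subrr add0r.
by rewrite -(subrr L); apply: cvgB => //; rewrite (cvg_shiftS (mxpsum c)).
Qed.

Lemma mxpsum1E N : mxpsum (fun=> 1) N.+1 = A *m (1%:M - Q ^+ N.+1).
Proof.
rewrite mxpsumE !scale1r /mxpsum big1 ?mulmx0 ?addr0 // => k _.
by rewrite /fdiff subrr scale0r.
Qed.

Lemma cvg_exprmx0 : (fun N => Q ^+ N) @ \oo --> (0 : 'M[R]_n).
Proof.
have bounded N i j : mxpsum (fun=> 1) N.+1 i j <= \sum_l `|A i l|.
  rewrite mxpsum1E mxE; apply: ler_sum => l _.
  apply: le_trans (ler_norm _) _; rewrite normrM ler_piMr // !mxE.
  have := exprmx_ge0 N.+1 l j; have := exprmx_le1 N.+1 l j.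
  by case: (l == j) => /= ? ?; rewrite ler_norml; apply/andP; split; lra.
have := bounded_mxpsum_term_cvg0 (fun=> 1) (\matrix_(i, j) \sum_l `|A i l|) (fun=> ler01).
rewrite (_ : (fun N => _ *: Q ^+ N) = (fun N => Q ^+ N)); last first.
  by apply: funext => N; rewrite scale1r.
by apply => N i j; rewrite mxE bounded.
Qed.

Lemma cvg_mxpsum1 : mxpsum (fun=> 1) @ \oo --> A.
Proof.
rewrite -(cvg_shiftS (mxpsum _)) /=; under eq_fun do rewrite mxpsum1E.
have QS : (fun N => Q ^+ N.+1) @ \oo --> (0 : 'M[R]_n).
  by move: cvg_exprmx0; rewrite -cvg_shiftS.
have := cvg_mulmxl A (cvgB (cvg_cst (1%:M : 'M[R]_n)) QS).
by rewrite subr0 mulmx1; apply.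
Qed.

Lemma invmx_ge0 i j : 0 <= A i j.
Proof.
have := nondecreasing_mx_cvg_le (ler_mxpsumS (fun=> 1) (fun=> ler01)) cvg_mxpsum1 0%N i j.
by rewrite /mxpsum big_ord0 mxE.
Qed.

Lemma mxpsum_binomialS j N :
  mxpsum (fun k => 'C(k, j.+1)%:R) N.+1 =
  A *m (Q *m mxpsum (fun k => 'C(k, j)%:R) N) - A *m ('C(N, j.+1)%:R *: Q ^+ N.+1).
Proof.
rewrite mxpsumE bin0n scale0r add0r mulmxBr; congr (_ *m (_ *m mxpsum _ _) - _).
by apply: funext => k; rewrite /fdiff binS natrD addrAC subrr add0r.
Qed.

Lemma invmx_1B_exprS j : A *m (Q *m (Q ^+ j *m A ^+ j.+1)) = Q ^+ j.+1 *m A ^+ j.+2.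
Proof.
have AQ : GRing.comm A Q by rewrite /GRing.comm -!mulmxE invmx_1B_comm.
rewrite !mulmxE mulrA AQ -mulrA [A * (_ * _)]mulrA (commrX j AQ).
by rewrite -mulrA mulrA -!exprS.
Qed.

Lemma cvg_mxpsum_binomial j :
  mxpsum (fun k => 'C(k, j)%:R) @ \oo --> Q ^+ j *m A ^+ j.+1.
Proof.
elim: j => [|j IH].
  have -> : (fun k => 'C(k, 0)%:R) = (fun=> 1 : R) by apply: funext => k; rewrite bin0.
  by rewrite expr0 mul1mx expr1; exact: cvg_mxpsum1.
set U := mxpsum (fun k => 'C(k, j)%:R).
have AQ_ge0 : forall i k, 0 <= (A *m Q) i k by apply: mulmx_ge0 invmx_ge0 Q_ge0.
have bound N i k : mxpsum (fun k => 'C(k, j.+1)%:R) N.+1 i k <=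
                   (A *m Q *m (Q ^+ j *m A ^+ j.+1)) i k.
  rewrite mxpsum_binomialS [_ i k]mxE [X in _ + X]mxE.
  apply: (@le_trans _ _ ((A *m Q *m U N) i k)).
    rewrite -mulmxA gerBl; apply: mulmx_ge0 invmx_ge0 _ i k => ? ?.
    by rewrite mxE mulr_ge0 ?exprmx_ge0.
  have U_nd := ler_mxpsumS (fun k => 'C(k, j)%:R) (fun k => ler0n _ _).
  exact: ler_mulmx2l AQ_ge0 (nondecreasing_mx_cvg_le U_nd IH N) i k.
have boundary : (fun N => 'C(N, j.+1)%:R *: Q ^+ N.+1) @ \oo --> (0 : 'M[R]_n).
  rewrite (_ : (fun N => _) = fun N => ('C(N, j.+1)%:R *: Q ^+ N) *m Q); last first.
    by apply: funext => N; rewrite -scalemxAl mulmxE exprSr.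
  rewrite -(mul0mx n Q); apply: cvg_mulmxr.
  exact: bounded_mxpsum_term_cvg0 (fun k => ler0n _ _) bound.
rewrite -(cvg_shiftS (mxpsum _)) /=; under eq_fun do rewrite mxpsum_binomialS.
have := cvgB (cvg_mulmxl A (cvg_mulmxl Q IH)) (cvg_mulmxl A boundary).
by rewrite invmx_1B_exprS mulmx0 subr0; apply.
Qed.

Lemma cvg_mxpsum_shifted_pow (x : R) m :
  mxpsum (fun k => (k%:R + x) ^+ m) @ \oo -->
  \sum_(j < m.+1) bst m j x *: (Q ^+ j *m A ^+ j.+1).
Proof.
have -> : mxpsum (fun k => (k%:R + x) ^+ m) =
    (fun N => \sum_(j < m.+1) bst m j x *: mxpsum (fun k => 'C(k, j)%:R) N).
  apply: funext => N; rewrite /mxpsum; under [RHS]eq_bigr do rewrite scaler_sumr.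
  rewrite exchange_big /=; apply: eq_bigr => k _.
  rewrite shifted_pow_bst scaler_suml; apply: eq_bigr => j _.
  by rewrite scalerA mulrC.
apply: cvg_big => [|j _]; first exact: add_continuous.
by apply: cvgZr; exact: cvg_mxpsum_binomial.
Qed.

End SubstochasticPowerSeries.

Section FirstPassage.
Context {R : realType} {S : finType}.

Lemma sum_tupleS (V : nmodType) k (F : k.+1.-tuple S -> V) :
  \sum_(s : k.+1.-tuple S) F s = \sum_(x : S) \sum_(t : k.-tuple S) F [tuple of x :: t].
Proof.
rewrite pair_big /= (reindex (fun p : S * k.-tuple S => [tuple of p.1 :: p.2])) /=.
  by apply: eq_bigr => -[x t].
exists (fun s => (thead s, [tuple of behead s])) => [[x t] _|s _].
  by congr (_, _); apply: val_inj.
by rewrite [in RHS](tuple_eta s).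
Qed.

Lemma sum_tuple0 (V : nmodType) (F : 0.-tuple S -> V) :
  \sum_(t : 0.-tuple S) F t = F [tuple].
Proof.
rewrite (bigD1 [tuple]) //= big1 ?addr0 // => t.
by rewrite (tuple0 t); move/eqP.
Qed.

Lemma traj_cons k (i x : S) (t : k.-tuple S) r : (r <= k)%N ->
  traj i [tuple of x :: t] r.+1 = traj x t r.
Proof. by case: r => [|r] rk //=; apply: set_nth_default; rewrite size_tuple. Qed.

Lemma pathw_cons (P : S -> S -> R) k (i x : S) (t : k.-tuple S) :
  pathw P i [tuple of x :: t] = P i x * pathw P x t.
Proof.
rewrite /pathw big_ord_recl; congr (_ * _); apply: eq_bigr => r _.
by rewrite lift0 !traj_cons ?(ltn_ord r) ?(ltnW (ltn_ord r)).
Qed.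

Lemma cntS (A : {set S}) y r : cnt A y r.+1 = (cnt A y r + (y r.+1 \in A))%N.
Proof. by rewrite /cnt big_nat_recr. Qed.

Lemma cnt_cons (A : {set S}) k (i x : S) (t : k.-tuple S) r : (r <= k)%N ->
  cnt A (traj i [tuple of x :: t]) r.+1 = ((x \in A) + cnt A (traj x t) r)%N.
Proof.
move=> rk; rewrite /cnt big_nat_recl //; congr (_ + _)%N.
apply: eq_big_nat => u /andP [_ ur]; rewrite traj_cons //.
by apply: leq_trans rk; rewrite -ltnS.
Qed.

Lemma tau_isE (A : {set S}) y n :
  tau_is A y n = [&& (0 < n)%N, y n \in A & cnt A y n.-1 == 0%N].
Proof.
have cnt_nd r r' : (r <= r')%N -> (cnt A y r <= cnt A y r')%N.
  move=> rr'; rewrite -(subnKC rr'); elim: (r' - r)%N => [|e IH]; first by rewrite addn0.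
  by rewrite addnS cntS (leq_trans IH) ?leq_addr.
rewrite /tau_is; case: n => [|n] //=; apply/idP/idP.
  case/andP => /eqP c1 /forallP /(_ (Ordinal (ltnSn n))) /= cn.
  have : (cnt A y n <= 1)%N by rewrite -c1 cnt_nd.
  rewrite leq_eqVlt (negbTE cn) /= ltnS leqn0 => /eqP c0.
  by move: c1; rewrite cntS c0; case: (y n.+1 \in A).
case/andP => yA /eqP c0; rewrite cntS c0 yA eqxx /=; apply/forallP => r.
by have := cnt_nd r n (ltn_ord r); rewrite c0 leqn0 => /eqP ->.
Qed.

Variable P : S -> S -> R.

Lemma probTau0 (A : {set S}) i j : probTau P A i j 0 = 0.
Proof. by rewrite /probTau big1 // => s /andP []. Qed.

Lemma probTau1 (A : {set S}) i j : probTau P A i j 1 = (j \in A)%:R * P i j.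
Proof.
rewrite /probTau big_mkcond sum_tupleS /=; under eq_bigr do rewrite sum_tuple0.
rewrite (bigD1 j) //= big1 ?addr0 => [|x xj]; last first.
  by rewrite tau_isE /= (negbTE xj) andbF.
rewrite tau_isE /= /cnt big_geq //; case: (j \in A) => /=; last by rewrite mul0r.
by rewrite mul1r pathw_cons /pathw big_ord0 mulr1; case: (j =P j).
Qed.

Lemma probTauSS (A : {set S}) i j k :
  probTau P A i j k.+2 = \sum_(x | x \notin A) P i x * probTau P A x j k.+1.
Proof.
rewrite /probTau big_mkcond sum_tupleS [RHS]big_mkcond; apply: eq_bigr => x _.
have E (t : k.+1.-tuple S) :
    tau_is A (traj i [tuple of x :: t]) k.+2 && (traj i [tuple of x :: t] k.+2 == j)
    = (x \notin A) && (tau_is A (traj x t) k.+1 && (traj x t k.+1 == j)).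
  rewrite !tau_isE !succnK cnt_cons // !traj_cons //.
  by case: (x \in A) => //=; rewrite ?andbF.
under eq_bigr do rewrite E.
case: (x \notin A) => /=; last by rewrite big1.
rewrite big_distrr [RHS]big_mkcond; apply: eq_bigr => t _.
by case: ifP => _; rewrite ?pathw_cons ?mulr0.
Qed.

End FirstPassage.

Section BlockMatrices.
Context {R : realType} {S : finType} (P : S -> S -> R).

Lemma ev_mem (A : {set S}) (i : 'I_#|A|) : ev i \in A.
Proof. exact: enum_valP. Qed.

Lemma sum_blk (A : {set S}) (F : S -> R) :
  \sum_(x in A) F x = \sum_(k < #|A|) F (ev k).
Proof. by rewrite -(big_enum_val (A := mem A)). Qed.

Lemma blk_ge0 : stochastic P -> forall (A B : {set S}) i j, 0 <= blk P A B i j.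
Proof. by case=> P0 _ A B i j; rewrite mxE. Qed.

Lemma blk_rowsum : stochastic P ->
  forall (A B : {set S}) i, \sum_j blk P A B i j <= 1.
Proof.
case=> P0 P1 A B i; rewrite -(P1 (ev i)) (bigID (mem B)) /= sum_blk -[leLHS]addr0.
by apply: lerD; [apply: ler_sum => j _; rewrite mxE | apply: sumr_ge0].
Qed.

Lemma probTau_blk (B J : {set S}) : J \subset ~: B ->
  forall k (i : 'I_#|B|) (j : 'I_#|J|),
  probTau P (~: B) (ev i) (ev j) k.+1 = (blk P B B ^+ k *m blk P B J) i j.
Proof.
move=> /fintype.subsetP JB; elim=> [|k IH] i j.
  by rewrite probTau1 JB ?ev_mem // expr0 mul1mx mxE mul1r.
rewrite probTauSS exprS -mulmxE -mulmxA mxE.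
rewrite (eq_bigl (mem B)) => [|x]; last by rewrite inE negbK.
by rewrite sum_blk; apply: eq_bigr => l _; rewrite IH [blk P B B i l]mxE.
Qed.

End BlockMatrices.

Lemma moment_isE {R : realType} {p q : nat} (Y : nat -> 'M[R]_(p, q)) m L :
  moment_is Y m L <-> (fun N => \sum_(n < N) n%:R ^+ m *: Y n) @ \oo --> L.
Proof.
have E i j : (fun N => (\sum_(n < N) n%:R ^+ m *: Y n) i j) =
             (fun N => \sum_(n < N) n%:R ^+ m * Y n i j).
  by apply: funext => N; rewrite summxE; apply: eq_bigr => n _; rewrite mxE.
by rewrite cvg_mxP /moment_is; split => YL i j; [rewrite E | rewrite -E].
Qed.

Section ExitAndReturn.
Context {R : realType} {S : finType} (P : S -> S -> R) (M : {set S}).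

Lemma probN1_0 : probN1 P M 0 = 0.
Proof. by apply/matrixP => i j; rewrite !mxE probTau0. Qed.

Lemma probN1S k : probN1 P M k.+1 = blk P M M ^+ k *m blk P M (~: M).
Proof. by apply/matrixP => i j; rewrite mxE probTau_blk ?subxx. Qed.

Lemma probR1_0 : probR1 P M 0 = 0.
Proof. by apply/matrixP => i j; rewrite !mxE probTau0. Qed.

Lemma probR1_1 : probR1 P M 1 = blk P M M.
Proof. by apply/matrixP => i j; rewrite !mxE probTau1 ev_mem mul1r. Qed.

Lemma probR1SS k : probR1 P M k.+2 =
  blk P M (~: M) *m blk P (~: M) (~: M) ^+ k *m blk P (~: M) M.
Proof.
apply/matrixP => i j; rewrite mxE probTauSS -mulmxA mxE.
rewrite (eq_bigl (mem (~: M))) => [|x]; last by rewrite !inE.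
rewrite sum_blk; apply: eq_bigr => l _; rewrite [blk _ _ _ i l]mxE.
by have := probTau_blk P (~: M) M; rewrite finset.setCK => /(_ (subxx M)) ->.
Qed.

Variable m : nat.

Lemma moment_psum_N1 N : \sum_(n < N.+1) n%:R ^+ m *: probN1 P M n =
  mxpsum (blk P M M) (fun k => (k%:R + 1) ^+ m) N *m blk P M (~: M).
Proof.
rewrite big_ord_recl probN1_0 scaler0 add0r /mxpsum mulmx_suml.
by apply: eq_bigr => k _; rewrite lift0 -natr1 probN1S scalemxAl.
Qed.

Lemma moment_psum_R1 N : \sum_(n < N.+2) n%:R ^+ m *: probR1 P M n =
  blk P M M + blk P M (~: M) *m
    mxpsum (blk P (~: M) (~: M)) (fun k => (k%:R + 2) ^+ m) N *m blk P (~: M) M.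
Proof.
rewrite !big_ord_recl probR1_0 scaler0 add0r probR1_1 expr1n scale1r; congr (_ + _).
rewrite /mxpsum mulmx_sumr mulmx_suml; apply: eq_bigr => k _.
by rewrite !lift0 probR1SS -addn2 natrD -scalemxAr -scalemxAl.
Qed.

End ExitAndReturn.

Theorem mainTheorem1 (R : realType) (S : finType) (P : S -> S -> R)
    (M : {set S}) :
  stochastic P ->
  M != finset.set0 -> ~: M != finset.set0 ->
  (1%:M - blk P M M) \in unitmx ->
  (1%:M - blk P (~: M) (~: M)) \in unitmx ->
  forall m : nat,
    moment_is (probN1 P M) m
      (\sum_(j < m.+1) bst m j 1 *:
         (blk P M M ^+ j *m invmx (1%:M - blk P M M) ^+ j.+1 *m blk P M (~: M)))
  /\
    moment_is (probR1 P M) m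
      (blk P M M + blk P M (~: M) *m
         (\sum_(j < m.+1) bst m j 2 *:
            (blk P (~: M) (~: M) ^+ j *m invmx (1%:M - blk P (~: M) (~: M)) ^+ j.+1)) *m
         blk P (~: M) M).
Proof.
move=> Pst _ _ U_M U_Mc m.
have series (A : {set S}) x : (1%:M - blk P A A) \in unitmx ->
    mxpsum (blk P A A) (fun k => (k%:R + x) ^+ m) @ \oo -->
    \sum_(j < m.+1) bst m j x *: (blk P A A ^+ j *m invmx (1%:M - blk P A A) ^+ j.+1).
  by move=> U; exact: cvg_mxpsum_shifted_pow _ (blk_ge0 P Pst _ _) (blk_rowsum P Pst _ _) U x m.
split; apply/moment_isE.
- rewrite -(cvg_shiftS (fun N => \sum_(n < N) _)) /=.
  under eq_fun do rewrite moment_psum_N1.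
  under eq_bigr do rewrite scalemxAl; rewrite -mulmx_suml.
  exact: cvg_mulmxr (series _ _ U_M).
- rewrite -(cvg_shiftS (fun N => \sum_(n < N) _)) /=.
  rewrite -(cvg_shiftS (fun N => \sum_(n < N.+1) _)) /=.
  under eq_fun do rewrite moment_psum_R1.
  apply: cvgD; first exact: cvg_cst.
  exact: cvg_mulmxr (cvg_mulmxl _ (series _ _ U_Mc)).
Qed.
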